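(* Let $p\ge2$ be an integer, $\mathcal{F}$ the infinite rooted tree with root $\delta$ in which every vertex has exactly $p$ children, and let $a,b$ be integral weight functions on $\mathcal{F}$ with weights $\omega_a,\omega_b$ respectively. Then $$\langle a,b\rangle\ \ge\ \sum_{i=0}^{\infty}p^i\,\widehat\gamma_i(\omega_a)\,\widehat\gamma_i(\omega_b).$$
   Context: An integral weight function with weight $\omega$ (a nonnegative integer) is a map $a:V(\mathcal{F})\to\mathbb{Z}_{\ge0}$ such that (1) for every infinite path $T$ starting at the root, $\sum_{v\in T}a(v)\ge\omega$; (2) for every vertex $v$, $a(v)\ge\sum_{u\in N_v}a(u)$, where $N_v$ is the set of children of $v$. The scalar product is $\langle a,b\rangle=\sum_{v}a(v)b(v)\in[0,\infty]$. An integral resolution of $\omega$ is a sequence $(\gamma_i)_{i\ge0}$ of nonnegative integers with $\gamma_i\ge p\gamma_{i+1}$ and $\sum_i\gamma_i=\omega$; $(\widehat\gamma_i(\omega))_{i\ge0}$ denotes the lexicographically smallest one. *)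

From mathcomp Require Import all_boot.
Set Implicit Arguments. Unset Strict Implicit. Unset Printing Implicit Defensive.

(* The p-ary tree F: vertices are finite words over 'I_p, the root delta is
   the empty word [::], and the children of v are the words rcons v i. *)
Definition vertex (p : nat) := seq 'I_p.

(* An infinite path from the root is given by an infinite sequence of
   choices f; its vertices are the prefixes mkseq f n, n = 0, 1, 2, ... *)
Definition path_vertex (p : nat) (f : nat -> 'I_p) (n : nat) : vertex p :=
  mkseq f n.

(* Condition (1): the (possibly
   infinite) sum of a along every infinite path from the root is >= w;
   since all terms are nonnegative this means some partial sum is >= w. *)
Definition integral_weight_function (p : nat) (a : vertex p -> nat) (w : nat)
  : Prop :=
  (forall f : nat -> 'I_p,
      exists N, w <= \sum_(n < N) a (path_vertex f n)) /\
  (forall v : vertex p, \sum_(i : 'I_p) a (rcons v i) <= a v).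

(* Partial scalar product over all vertices of depth < N; the scalar product
   <a,b> in [0,oo] is the supremum of these. *)
Definition scal_partial (p : nat) (a b : vertex p -> nat) (N : nat) : nat :=
  \sum_(n < N) \sum_(t : n.-tuple 'I_p) a (tval t) * b (tval t).

Definition integral_resolution (p w : nat) (g : nat -> nat) : Prop :=
  (forall i, p * g i.+1 <= g i) /\
  (exists N, forall M, N <= M -> \sum_(i < M) g i = w).

Definition lex_lt (g h : nat -> nat) : Prop :=
  exists k, (forall i, i < k -> g i = h i) /\ g k < h k.

(* g is the lexicographically smallest integral resolution of w,
   i.e. g = (gammahat_i(w))_i. *)
Definition lex_min_resolution (p w : nat) (g : nat -> nat) : Prop :=
  integral_resolution p w g /\
  (forall h, integral_resolution p w h -> ~ lex_lt h g).

From mathcomp Require Import all_boot zify.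
Set Implicit Arguments. Unset Strict Implicit. Unset Printing Implicit Defensive.

(* The lexicographically smallest resolution is the greedy one: gammahat_0(w)
   is the least first term from which a sequence with c_(i+1) <= c_i / p can
   still sum to w, and the rest is gammahat(w - gammahat_0(w)).  Hence the
   prefix sums of gammahat(w) are dominated by those of every such sequence of
   total at least w, and by Abel summation so are its sums weighted by
   nonincreasing coefficients.  If a has weight w, each subtree of the root
   carries a weight function of weight w - a(delta), so
   (a(delta), gammahat(w - a(delta))) is such a sequence.  Replacing
   gammahat(w_a) and gammahat(w_b) by these two sequences, the weighted sum
   becomes a(delta) b(delta) plus p copies of the same sum for the subtrees,
   and induction on the number of terms concludes. *)

Lemma leq_sum_prefix (F : nat -> nat) m n : m <= n ->
  \sum_(i < m) F i <= \sum_(i < n) F i.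
Proof. by move=> /subnKC <-; rewrite big_split_ord leq_addr. Qed.

Lemma sum_ord_recl (F : nat -> nat) n :
  \sum_(i < n.+1) F i = F 0 + \sum_(i < n) F i.+1.
Proof. exact: big_ord_recl. Qed.

Lemma summation_by_parts (D u : nat -> nat) K : (forall i, D i.+1 <= D i) ->
  \sum_(i < K) D i * u i =
  \sum_(j < K) (D j - D j.+1) * \sum_(i < j.+1) u i + D K * \sum_(i < K) u i.
Proof.
move=> D_noninc; elim: K => [|K IH]; first by rewrite !big_ord0 muln0.
rewrite big_ord_recr /= IH [in RHS]big_ord_recr /= -!addnA; congr (_ + _).
by rewrite [in RHS]big_ord_recr /= -mulnDl subnK // -mulnDr.
Qed.

Lemma sum_tupleS (T : finType) n (F : seq T -> nat) :
  \sum_(t : n.+1.-tuple T) F t = \sum_(j : T) \sum_(t : n.-tuple T) F (j :: t).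
Proof.
rewrite pair_big /= (reindex (fun u : T * n.-tuple T => [tuple of u.1 :: u.2])) //=.
exists (fun t : n.+1.-tuple T => (thead t, [tuple of behead t])).
  by move=> [j t] _ /=; rewrite theadE; congr (_, _); apply: val_inj.
by move=> t _ /=; rewrite [RHS]tuple_eta.
Qed.

Section Resolutions.

Variable p : nat.
Hypothesis p_gt1 : 1 < p.

Definition pdecreasing (c : nat -> nat) := forall i, p * c i.+1 <= c i.

(* The largest total of a p-decreasing sequence with first term c: its i-th
   term is at most c %/ p ^ i, and these vanish for i > c. *)
Definition max_total (c : nat) := \sum_(i < c.+1) c %/ p ^ i.

Lemma max_total_stable c N : c < N -> \sum_(i < N) c %/ p ^ i = max_total c.
Proof.
move=> /subnKC <-; rewrite big_split_ord /= [X in _ + X]big1 ?addn0 // => i _.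
by apply: divn_small; have := ltn_expl (c.+1 + i) p_gt1; lia.
Qed.

Lemma leq_max_total c : c <= max_total c.
Proof. by rewrite /max_total big_ord_recl expn0 divn1 leq_addr. Qed.

Lemma max_totalE c : max_total c = c + max_total (c %/ p).
Proof.
have [->|c_gt0] := posnP c.
  by rewrite div0n /max_total !big_ord1 div0n.
rewrite -(max_total_stable (ltn_Pdiv p_gt1 c_gt0)) /max_total.
rewrite big_ord_recl expn0 divn1; congr (_ + _).
by apply: eq_bigr => i _; rewrite /= expnS divnMA.
Qed.

Lemma pdecreasing_le_divn c i : pdecreasing c -> c i <= c 0 %/ p ^ i.
Proof.
move=> c_decr; rewrite leq_divRL ?expn_gt0 ?(ltnW p_gt1) //.
elim: i => [|i IH]; first by rewrite muln1.
rewrite expnS mulnA [_ * p]mulnC (leq_trans _ IH) //.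
by rewrite leq_mul2r c_decr orbT.
Qed.

Lemma sum_pdecreasing_le c N : pdecreasing c -> \sum_(i < N) c i <= max_total (c 0).
Proof.
move=> c_decr; rewrite -(max_total_stable (ltn_addl N (ltnSn (c 0)))).
apply: (@leq_trans (\sum_(i < N) c 0 %/ p ^ i)).
  by apply: leq_sum => i _; apply: pdecreasing_le_divn.
exact: (leq_sum_prefix (fun i => c 0 %/ p ^ i) (leq_addr _ _)).
Qed.

Definition covering (x : nat) (c : nat -> nat) :=
  pdecreasing c /\ exists N, x <= \sum_(i < N) c i.

Lemma resolution_covering x g : integral_resolution p x g -> covering x g.
Proof. by case=> g_decr [N gN]; split => //; exists N; rewrite gN. Qed.

Lemma covering_max_total x c : covering x c -> x <= max_total (c 0).
Proof. by case=> c_decr [N cN]; apply: leq_trans cN (sum_pdecreasing_le _ c_decr). Qed.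

Definition min_lead (x : nat) : nat :=
  ex_minn (ex_intro (fun c => x <= max_total c) x (leq_max_total x)).

Lemma min_lead_spec x : x <= max_total (min_lead x).
Proof. by rewrite /min_lead; case: ex_minnP. Qed.

Lemma min_lead_min x c : x <= max_total c -> min_lead x <= c.
Proof. by rewrite /min_lead; case: ex_minnP => m _ m_min /m_min. Qed.

Lemma min_lead_le x : min_lead x <= x.
Proof. exact/min_lead_min/leq_max_total. Qed.

Lemma min_lead_gt0 x : 0 < x -> 0 < min_lead x.
Proof.
have := min_lead_spec x; case: (min_lead x) => //.
by rewrite /max_total big_ord1 div0n; lia.
Qed.

Lemma min_lead_sub x c : x <= max_total c -> p * min_lead (x - c) <= c.
Proof.
rewrite max_totalE => x_le.
have lead_le : min_lead (x - c) <= c %/ p by apply: min_lead_min; rewrite leq_subLR.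
by apply: leq_trans (leq_mul (leqnn p) lead_le) _; rewrite mulnC leq_divM.
Qed.

Fixpoint greedy (x i : nat) : nat :=
  if i is i'.+1 then greedy (x - min_lead x) i' else min_lead x.

Lemma sum_greedy x n : x <= n -> \sum_(i < n) greedy x i = x.
Proof.
elim: n x => [|n IH] x x_le; first by rewrite big_ord0; lia.
have lead_le := min_lead_le x.
rewrite big_ord_recl /= IH; first lia.
by have [->|/min_lead_gt0] := posnP x; lia.
Qed.

Lemma greedy_pdecreasing x : pdecreasing (greedy x).
Proof.
move=> i; elim: i x => [|i IH] x; last exact: IH.
exact: min_lead_sub (min_lead_spec x).
Qed.

Lemma greedy_resolution x : integral_resolution p x (greedy x).
Proof. by split; [apply: greedy_pdecreasing | exists x => M; apply: sum_greedy]. Qed.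

Lemma greedy_prefix_min x c j : covering x c ->
  \sum_(i < j) greedy x i <= \sum_(i < j) c i.
Proof.
elim: j x c => [|j IH] x c c_cov; first by rewrite !big_ord0.
have [c_decr [N cN]] := c_cov.
have lead_le : min_lead x <= c 0 by apply/min_lead_min/covering_max_total.
(* c' hands the excess c 0 - min_lead x on to the next term. *)
pose c' i := if i is i'.+1 then c i'.+2 else c 1 + (c 0 - min_lead x).
have sum_c' k : \sum_(i < k.+1) c' i = (c 0 - min_lead x) + \sum_(i < k.+1) c i.+1.
  by rewrite sum_ord_recl (sum_ord_recl (fun i => c i.+1)) /=; lia.
have c'_cov : covering (x - min_lead x) c'.
  split.
    by case=> [|i] /=; [apply: leq_trans (c_decr 1) (leq_addr _ _) | apply: c_decr].
  exists N.+1; rewrite sum_c'.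
  by have := leq_sum_prefix c (leqW (leqnSn N)); rewrite sum_ord_recl; lia.
have c'_le : \sum_(i < j) c' i <= (c 0 - min_lead x) + \sum_(i < j) c i.+1.
  by case: (j) => [|k]; rewrite ?big_ord0 ?sum_c'.
rewrite !sum_ord_recl /= -(subnKC lead_le) -addnA leq_add2l.
exact: leq_trans (IH _ _ c'_cov) c'_le.
Qed.

Lemma lex_min_greedy x g : lex_min_resolution p x g -> g =1 greedy x.
Proof.
move=> [g_res g_min].
suff agree k : forall i, i < k -> g i = greedy x i by move=> i; apply: (agree i.+1).
elim: k => [|k IH] i; first by rewrite ltn0.
rewrite ltnS leq_eqVlt => /predU1P[-> {i} | /IH //].
have : \sum_(i < k.+1) greedy x i <= \sum_(i < k.+1) g i.
  exact/greedy_prefix_min/resolution_covering.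
rewrite !big_ord_recr /= (eq_bigr (fun i : 'I_k => g i)); last by move=> j _; rewrite IH.
rewrite leq_add2l => greedy_le.
apply/eqP; rewrite eqn_leq greedy_le andbT leqNgt; apply/negP => lt_k.
by apply: (g_min _ (greedy_resolution x)); exists k; split => // i /IH.
Qed.

Lemma greedy_weighted_le x c (D : nat -> nat) K : covering x c ->
  (forall i, D i.+1 <= D i) ->
  \sum_(i < K) D i * greedy x i <= \sum_(i < K) D i * c i.
Proof.
move=> c_cov D_noninc; rewrite !summation_by_parts //.
apply: leq_add; last by rewrite leq_mul2l greedy_prefix_min ?orbT.
by apply: leq_sum => j _; rewrite leq_mul2l greedy_prefix_min ?orbT.
Qed.

Lemma pdecreasing_exp_weight v : pdecreasing v ->
  forall i, p ^ i.+1 * v i.+1 <= p ^ i * v i.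
Proof. by move=> v_decr i; rewrite expnS -mulnA mulnCA leq_mul2l v_decr orbT. Qed.

Lemma greedy_exp_weighted_le x y c d K : covering x c -> covering y d ->
  \sum_(i < K) p ^ i * greedy x i * greedy y i <= \sum_(i < K) p ^ i * c i * d i.
Proof.
move=> c_cov d_cov; apply: (@leq_trans (\sum_(i < K) p ^ i * c i * greedy y i)).
  rewrite (eq_bigr (fun i : 'I_K => p ^ i * greedy y i * greedy x i)); last first.
    by move=> i _; rewrite mulnAC.
  rewrite [X in _ <= X](eq_bigr (fun i : 'I_K => p ^ i * greedy y i * c i)); last first.
    by move=> i _; rewrite mulnAC.
  exact: greedy_weighted_le c_cov (pdecreasing_exp_weight (greedy_pdecreasing y)).
exact: greedy_weighted_le d_cov (pdecreasing_exp_weight c_cov.1).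
Qed.

Definition min_child (a : vertex p -> nat) (v : vertex p) : 'I_p :=
  [arg min_(j < Ordinal (ltnW p_gt1)) a (rcons v j)].

Fixpoint min_path (a : vertex p -> nat) (n : nat) : vertex p :=
  if n is n'.+1 then rcons (min_path a n') (min_child a (min_path a n')) else [::].

Lemma min_child_le a v j : a (rcons v (min_child a v)) <= a (rcons v j).
Proof. by rewrite /min_child; case: arg_minnP => // i _; apply. Qed.

Lemma path_vertex_min_path a n :
  path_vertex (fun k => min_child a (min_path a k)) n = min_path a n.
Proof. by elim: n => [|n IH] //; rewrite /path_vertex mkseqS -/(path_vertex _ n) IH. Qed.

Lemma min_path_pdecreasing a :
  (forall v, \sum_(j : 'I_p) a (rcons v j) <= a v) ->
  pdecreasing (fun n => a (min_path a n)).
Proof.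
move=> a_super n /=; apply: leq_trans (a_super (min_path a n)).
set m := a (rcons _ _).
have -> : p * m = \sum_(j : 'I_p) m by rewrite sum_nat_const card_ord.
by apply: leq_sum => j _; apply: min_child_le.
Qed.

Lemma weight_le_max_total_root (a : vertex p -> nat) x :
  integral_weight_function a x -> x <= max_total (a [::]).
Proof.
move=> [a_paths a_super].
have [N aN] := a_paths (fun k => min_child a (min_path a k)).
apply: leq_trans aN _; under eq_bigr => n _ do rewrite path_vertex_min_path.
exact: sum_pdecreasing_le (min_path_pdecreasing a_super).
Qed.

Definition subtree (a : vertex p -> nat) (j : 'I_p) (v : vertex p) := a (j :: v).

Lemma path_vertex_cons (f : nat -> 'I_p) j n :
  path_vertex (fun k => if k is k'.+1 then f k' else j) n.+1 = j :: path_vertex f n.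
Proof. by rewrite /path_vertex /mkseq /= -[1]addn0 iotaDl -map_comp. Qed.

Lemma subtree_weight_function (a : vertex p -> nat) x j :
  integral_weight_function a x -> integral_weight_function (subtree a j) (x - a [::]).
Proof.
move=> [a_paths a_super]; split => [f | v]; last exact: a_super.
have [[|N] aN] := a_paths (fun k => if k is k'.+1 then f k' else j).
  by exists 0; move: aN; rewrite big_ord0; lia.
exists N; move: aN; rewrite big_ord_recl leq_subLR.
by under eq_bigr => i _ do rewrite /= path_vertex_cons.
Qed.

Definition rooted_greedy (a : vertex p -> nat) (x i : nat) : nat :=
  if i is i'.+1 then greedy (x - a [::]) i' else a [::].

Lemma rooted_greedy_covering (a : vertex p -> nat) x :
  integral_weight_function a x -> covering x (rooted_greedy a x).
Proof.
move=> a_wf; split.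
  case=> [|i]; last exact: greedy_pdecreasing.
  exact/min_lead_sub/weight_le_max_total_root.
exists x.+1; rewrite big_ord_recl /= sum_greedy ?leq_subr //.
by rewrite -leq_subLR.
Qed.

Lemma scal_partial_mono (a b : vertex p -> nat) m n :
  m <= n -> scal_partial a b m <= scal_partial a b n.
Proof. exact: (leq_sum_prefix (fun k => \sum_(t : k.-tuple 'I_p) a t * b t)). Qed.

Lemma scal_partialS (a b : vertex p -> nat) N :
  scal_partial a b N.+1 =
  a [::] * b [::] + \sum_(j : 'I_p) scal_partial (subtree a j) (subtree b j) N.
Proof.
rewrite /scal_partial big_ord_recl /=; congr (_ + _).
  rewrite (eq_bigr (fun _ => a [::] * b [::])); last by move=> t _; rewrite (tuple0 t).
  by rewrite sum_nat_const card_tuple expn0 mul1n.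
rewrite exchange_big /=; apply: eq_bigr => i _.
exact: (sum_tupleS i (fun s => a s * b s)).
Qed.

Lemma greedy_scal_bound M x y (a b : vertex p -> nat) :
  integral_weight_function a x -> integral_weight_function b y ->
  exists N, \sum_(i < M) p ^ i * greedy x i * greedy y i <= scal_partial a b N.
Proof.
elim: M x y a b => [|M IH] x y a b a_wf b_wf; first by exists 0; rewrite big_ord0.
have [N N_sub] := fin_all_exists (fun j : 'I_p =>
  IH _ _ _ _ (subtree_weight_function j a_wf) (subtree_weight_function j b_wf)).
exists (\max_j N j).+1; rewrite scal_partialS.
apply: leq_trans (greedy_exp_weighted_le _ (rooted_greedy_covering a_wf)
  (rooted_greedy_covering b_wf)) _.
rewrite big_ord_recl /= expn0 mul1n leq_add2l.
set Phi := \sum_(i < M) p ^ i * greedy (x - a [::]) i * greedy (y - b [::]) i.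
have -> : \sum_(i < M) p ^ i.+1 * greedy (x - a [::]) i * greedy (y - b [::]) i =
          \sum_(j : 'I_p) Phi.
  rewrite sum_nat_const card_ord big_distrr; apply: eq_bigr => i _.
  by rewrite expnS -!mulnA.
apply: leq_sum => j _; apply: leq_trans (N_sub j) _.
by apply: scal_partial_mono; apply: leq_bigmax.
Qed.

End Resolutions.

Theorem mainTheorem5 (p : nat) (hp : 2 <= p)
  (a b : vertex p -> nat) (wa wb : nat)
  (ha : integral_weight_function a wa) (hb : integral_weight_function b wb)
  (ga gb : nat -> nat)
  (hga : lex_min_resolution p wa ga) (hgb : lex_min_resolution p wb gb) :
  forall M : nat, exists N : nat,
    \sum_(i < M) p ^ i * ga i * gb i <= scal_partial a b N.
Proof.
move=> M; have [N greedy_le] := greedy_scal_bound hp M ha hb.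
exists N; rewrite (eq_bigr (fun i : 'I_M => p ^ i * greedy p wa i * greedy p wb i)) //.
by move=> i _; rewrite (lex_min_greedy hp hga) (lex_min_greedy hp hgb).
Qed.
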